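(* Let $\omega\ge1$, $n\ge1$, and $0\le A_i,B_i<2^\omega$ for $0\le i\le n-1$. Let $c_0=0$ and $c_{i+1}=\lfloor (A_i+B_i+c_i)/2^\omega\rfloor$. Suppose $\mathsf t_i,\mathsf p_i\in\{0,\dots,255\}$ are such that for each $i$ the case of $(\mathsf t_i,\mathsf p_i)$ with respect to base $256$ equals the case of $(A_i,B_i)$ with respect to base $2^\omega$. Let $\mathsf s_0,\dots,\mathsf s_{n-1}\in\{0,\dots,255\}$ be defined by $\sum_{i=0}^{n-1}256^i\mathsf s_i=\big(\sum_{i=0}^{n-1}256^i\mathsf t_i+\sum_{i=0}^{n-1}256^i\mathsf p_i\big)\bmod 256^n$. Then for every $0\le i\le n-1$, $(\mathsf s_i-\mathsf t_i-\mathsf p_i)\bmod 256=c_i$.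
   Context: For a base $b\ge2$ and integers $0\le x,y<b$, the case of $(x,y)$ with respect to base $b$ is $\mathbf N$ if $x+y\le b-2$, $\mathbf P$ if $x+y=b-1$, and $\mathbf G$ if $x+y\ge b$. *)

From mathcomp Require Import all_boot all_algebra.
Set Implicit Arguments. Unset Strict Implicit. Unset Printing Implicit Defensive.

Inductive digit_case := CaseN | CaseP | CaseG.

Definition case_of (b x y : nat) : digit_case :=
  if x + y <= b - 2 then CaseN
  else if x + y == b - 1 then CaseP
  else CaseG.

Fixpoint carry (omega : nat) (A B : nat -> nat) (i : nat) : nat :=
  match i with
  | 0 => 0
  | i'.+1 => (A i' + B i' + carry omega A B i') %/ 2 ^ omega
  end.

From mathcomp Require Import all_boot all_algebra zify.
Import GRing.Theory Num.Theory.

Set Implicit Arguments.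
Unset Strict Implicit.
Unset Printing Implicit Defensive.

(* When two digits and an incoming carry at most 1 are added, the outgoing
   carry depends only on the case of the digits: it is 0 for N, 1 for G, and
   the incoming carry for P.  Hence digit pairs with the same cases, in bases
   256 and 2^omega, produce the same carries, and the carry of position i is
   recovered from the i-th digit s_i of t + p as (s_i - t_i - p_i) mod 256. *)

Definition base_digits (b k : nat) (x : nat -> nat) := forall i, i < k -> x i < b.

Fixpoint add_carry (b : nat) (x y : nat -> nat) (i : nat) : nat :=
  match i with
  | 0 => 0
  | i'.+1 => (x i' + y i' + add_carry b x y i') %/ b
  end.

Lemma carry_add_carry omega A B i : carry omega A B i = add_carry (2 ^ omega) A B i.
Proof. by elim: i => //= i ->. Qed.

Definition carry_out (k : digit_case) (c : nat) : nat :=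
  match k with CaseN => 0 | CaseP => c | CaseG => 1 end.

Lemma divn_add_digits b x y c : 2 <= b -> x < b -> y < b -> c <= 1 ->
  (x + y + c) %/ b = carry_out (case_of b x y) c.
Proof.
move=> hb hx hy hc; have [->|->] : c = 0 \/ c = 1 by lia.
all: rewrite /case_of; case: ifP => ? /=; try case: ifP => ? /=; nia.
Qed.

Lemma add_carry_le1 b k x y : base_digits b k x -> base_digits b k y ->
  forall i, i <= k -> add_carry b x y i <= 1.
Proof.
move=> hx hy; elim=> [|i IH] //= hi.
have := hx i hi; have := hy i hi; have := IH (ltnW hi).
move=> hc hyi hxi; rewrite -ltnS ltn_divLR; lia.
Qed.

Lemma add_carry_eq_case b b' k x y x' y' : 2 <= b -> 2 <= b' ->
  base_digits b k x -> base_digits b k y ->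
  base_digits b' k x' -> base_digits b' k y' ->
  (forall i, i < k -> case_of b (x i) (y i) = case_of b' (x' i) (y' i)) ->
  forall i, i <= k -> add_carry b x y i = add_carry b' x' y' i.
Proof.
move=> hb hb' hx hy hx' hy' hcase; elim=> [|i IH] //= hi.
have c_le1 := add_carry_le1 hx hy (ltnW hi).
have c'_le1 := add_carry_le1 hx' hy' (ltnW hi).
by rewrite !divn_add_digits ?hx ?hy ?hx' ?hy' // hcase // IH // ltnW.
Qed.

Lemma add_digits_carry b k (x y : nat -> nat) :
  \sum_(i < k) b ^ i * x i + \sum_(i < k) b ^ i * y i
  = \sum_(i < k) b ^ i * ((x i + y i + add_carry b x y i) %% b)
    + b ^ k * add_carry b x y k.
Proof.
elim: k => [|k IH]; first by rewrite !big_ord0.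
rewrite !big_ord_recr /= expnSr -mulnA.
set c := add_carry b x y k in IH *; set q := _ %/ b; set r := _ %% b.
have e : b ^ k * x k + b ^ k * y k + b ^ k * c = b ^ k * r + b ^ k * (b * q).
  by rewrite -!mulnDr; congr (_ * _); rewrite [RHS]addnC mulnC /q /r -divn_eq.
by rewrite addnACA IH -!addnA; congr (_ + _); rewrite addnC e.
Qed.

Lemma digits_sum_lt b k x : base_digits b k x -> \sum_(i < k) b ^ i * x i < b ^ k.
Proof.
elim: k => [|k IH] hx; first by rewrite big_ord0.
rewrite big_ord_recr /= expnSr (@leq_trans (b ^ k * (x k).+1)) //.
  by rewrite mulnS ltn_add2r IH // => i hi; apply/hx/ltnW.
by rewrite leq_mul2l hx ?orbT.
Qed.

Lemma digits_sum_inj b k x y : base_digits b k x -> base_digits b k y ->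
  \sum_(i < k) b ^ i * x i = \sum_(i < k) b ^ i * y i ->
  forall i, i < k -> x i = y i.
Proof.
elim: k => [|k IH] hx hy //; rewrite !big_ord_recr /= => e.
have hx' : base_digits b k x by move=> i hi; apply/hx/ltnW.
have hy' : base_digits b k y by move=> i hi; apply/hy/ltnW.
have lower : \sum_(i < k) b ^ i * x i = \sum_(i < k) b ^ i * y i.
  have := congr1 (modn^~ (b ^ k)) e.
  by rewrite /= !(addnC (\sum_(_ < _) _)) !(mulnC (b ^ k)) !modnMDl !modn_small
    ?digits_sum_lt.
have top : x k = y k.
  have b_gt0 : 0 < b ^ k by rewrite expn_gt0 (leq_ltn_trans (leq0n _) (hx k _)).
  apply/eqP; rewrite -(eqn_pmul2l b_gt0); apply/eqP.
  by move: e; rewrite lower => /addnI.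
move=> i; rewrite ltnS leq_eqVlt => /predU1P[-> // | lt_ik].
exact: IH hx' hy' lower i lt_ik.
Qed.

Lemma add_digits_mod b k (x y : nat -> nat) : 0 < b ->
  (\sum_(i < k) b ^ i * x i + \sum_(i < k) b ^ i * y i) %% b ^ k
  = \sum_(i < k) b ^ i * ((x i + y i + add_carry b x y i) %% b).
Proof.
move=> b_gt0; rewrite add_digits_carry addnC mulnC modnMDl modn_small //.
by apply: (@digits_sum_lt b k (fun i => (x i + y i + _) %% b)) => i _; rewrite ltn_mod.
Qed.

Lemma modz_sub_add_digits b x y c : c < b ->
  ((Posz ((x + y + c) %% b) - Posz x - Posz y)%R %% Posz b)%Z = Posz c.
Proof.
move=> c_lt_b; have e : x + y + c = (x + y + c) %/ b * b + (x + y + c) %% b.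
  exact: divn_eq.
set q := _ %/ b in e; set r := _ %% b in e *.
have -> : (Posz r - Posz x - Posz y = (- Posz q) * Posz b + Posz c)%R.
  by move/(congr1 Posz): e; rewrite !PoszD PoszM; lia.
by rewrite modzMDl modz_small //; apply/andP; split.
Qed.

Theorem lemma2 (omega n : nat) (A B t p s : nat -> nat) :
  1 <= omega -> 1 <= n ->
  (forall i, i < n -> A i < 2 ^ omega) ->
  (forall i, i < n -> B i < 2 ^ omega) ->
  (forall i, i < n -> t i < 256) ->
  (forall i, i < n -> p i < 256) ->
  (forall i, i < n -> case_of 256 (t i) (p i) = case_of (2 ^ omega) (A i) (B i)) ->
  (forall i, i < n -> s i < 256) ->
  \sum_(i < n) 256 ^ i * s i
    = (\sum_(i < n) 256 ^ i * t i + \sum_(i < n) 256 ^ i * p i) %% 256 ^ n ->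
  forall i, i < n ->
    ((Posz (s i) - Posz (t i) - Posz (p i))%R %% 256)%Z = Posz (carry omega A B i).
Proof.
move=> omega_gt0 _ hA hB ht hp hcase hs hsum i hi.
have two_le_base : 2 <= 2 ^ omega by rewrite -{1}(expn1 2) leq_exp2l.
have -> : carry omega A B i = add_carry 256 t p i.
  rewrite carry_add_carry (add_carry_eq_case _ two_le_base ht hp hA hB hcase) //.
  exact: ltnW.
have -> : s i = (t i + p i + add_carry 256 t p i) %% 256.
  pose d j := (t j + p j + add_carry 256 t p j) %% 256.
  apply: (@digits_sum_inj _ _ s d hs _ _ _ hi) => [j _|]; first exact: ltn_mod.
  by rewrite hsum add_digits_mod.
by rewrite modz_sub_add_digits // (leq_ltn_trans (add_carry_le1 ht hp (ltnW hi))).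
Qed.
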